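(* Let $0<\alpha<1$ and suppose the Hilbert matrix operator $\mathcal{H}$ acts as an operator $\mathcal{H}\colon H^\infty_\alpha\to H^\infty_\alpha$. Then $$\|\mathcal{H}\|_{H^\infty_\alpha\to H^\infty_\alpha}\ \ge\ \frac{\pi}{\sin(\pi\alpha)}.$$
   Context: $\mathbb D=\{z\in\mathbb C:|z|<1\}$ and $H(\mathbb D)$ denotes the analytic functions on $\mathbb D$. For $0<\alpha<1$, the Korenblum space is $H^\infty_\alpha=\{f\in H(\mathbb D): \|f\|_{H^\infty_\alpha}=\sup_{z\in\mathbb D}(1-|z|^2)^\alpha|f(z)|<\infty\}$. The Hilbert matrix operator acts on $f(z)=\sum_{k\ge0}a_kz^k$ by $\mathcal{H}(f)(z)=\sum_{n\ge0}\big(\sum_{k\ge0}\frac{a_k}{n+k+1}\big)z^n$; equivalently $\mathcal{H}(f)(z)=\int_0^1 T_t(f)(z)\,dt$, where $T_t(f)(z)=\omega_t(z)f(\phi_t(z))$ with $\omega_t(z)=\frac{1}{(t-1)z+1}$ and $\phi_t(z)=\frac{t}{(t-1)z+1}$, $0<t<1$. *)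

From Stdlib Require Import Reals.
From Coquelicot Require Import Coquelicot.
Open Scope R_scope.

(* Sum of a complex series, computed componentwise (equals the limit when the
   series converges in C). *)
Definition Csum (u : nat -> C) : C :=
  (Series (fun k => fst (u k)), Series (fun k => snd (u k))).

(* An analytic function on the unit disc D, given by its Taylor coefficients
   a : nat -> C; the power series converges at every point of D. *)
Definition analytic_on_disc (a : nat -> C) : Prop :=
  forall z : C, Cmod z < 1 -> ex_series (fun k => (a k * Cpow z k)%C).

Definition fun_of_coef (a : nat -> C) (z : C) : C :=
  Csum (fun k => (a k * Cpow z k)%C).

Definition kweight (alpha : R) (z : C) : R := Rpower (1 - Cmod z ^ 2) alpha.

Definition korenblum_norm (alpha : R) (a : nat -> C) : Rbar :=
  Lub_Rbar (fun y => exists z : C, Cmod z < 1 /\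
              y = kweight alpha z * Cmod (fun_of_coef a z)).

Definition in_korenblum (alpha : R) (a : nat -> C) : Prop :=
  analytic_on_disc a /\
  exists M : R, forall z : C, Cmod z < 1 ->
      kweight alpha z * Cmod (fun_of_coef a z) <= M.

Definition hilbert_defined (a : nat -> C) : Prop :=
  forall n : nat, ex_series (fun k => (a k * RtoC (/ INR (n + k + 1)))%C).

Definition hilbert_coef (a : nat -> C) (n : nat) : C :=
  Csum (fun k => (a k * RtoC (/ INR (n + k + 1)))%C).

Definition hilbert_norm (alpha : R) : Rbar :=
  Lub_Rbar (fun y => exists a : nat -> C,
     in_korenblum alpha a /\ Rbar_le (korenblum_norm alpha a) (Finite 1) /\
     korenblum_norm alpha (hilbert_coef a) = Finite y).

From Stdlib Require Import Reals Lra Lia Psatz.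
From Coquelicot Require Import Coquelicot.
Open Scope R_scope.

(* The test function f(z) = 2^(-al) (1 - z)^(-al) lies in the unit ball of H^oo_al and has
   nonnegative Taylor coefficients a_k.  For 0 < r < 1,
     H f(r) = sum_n r^n sum_k a_k / (n + k + 1) = 2^(-al) int_0^1 (1 - s)^(-al) / (1 - r s) ds,
   and with u = 1 - s, d = 1 - r, the weighted value (1 - r^2)^al H f(r) tends to
   int_0^oo u^(-al) / (1 + u) du = pi / sin (pi al) as r -> 1.  Expanding 1 / (d + u) as a
   geometric series in u / d for u < d and in d / u for u > d evaluates the integral as the
   alternating series sum_m (-1)^m (1 / (m + al) + 1 / (m + 1 - al)), which is the partial
   fraction expansion of pi / sin (pi al); the latter follows from that of pi^2 / sin^2, proved
   by Herglotz's trick.  Integrals are never formed: finite truncations are compared through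
   their primitives and the mean value theorem. *)

Fixpoint psum (u : nat -> R) (N : nat) : R :=
  match N with O => 0 | S N => psum u N + u N end.

Lemma sum_n_psum u N : sum_n u N = psum u (S N).
Proof.
  induction N as [|N IH].
  - rewrite sum_O; simpl; lra.
  - rewrite sum_Sn, IH; reflexivity.
Qed.

Lemma psum_ext u v N : (forall n, (n < N)%nat -> u n = v n) -> psum u N = psum v N.
Proof. induction N; intros H; simpl; auto. rewrite IHN, H; auto. Qed.

Lemma psum_le u v N : (forall n, (n < N)%nat -> u n <= v n) -> psum u N <= psum v N.
Proof.
  induction N as [|N IH]; intros H; simpl; [lra|].
  pose proof (H N ltac:(lia)). pose proof (IH ltac:(intros; apply H; lia)). lra.
Qed.

Lemma psum_const0 N : psum (fun _ => 0) N = 0.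
Proof. induction N; simpl; [reflexivity | rewrite IHN; ring]. Qed.

Lemma psum_ge0 u N : (forall n, 0 <= u n) -> 0 <= psum u N.
Proof. intros H; induction N; simpl; [lra | pose proof (H N); lra]. Qed.

Lemma psum_le_psum u N M : (forall n, 0 <= u n) -> (N <= M)%nat -> psum u N <= psum u M.
Proof. intros H Hl; induction Hl; simpl; [lra | pose proof (H m); lra]. Qed.

Lemma psum_sub u v N : psum (fun n => u n - v n) N = psum u N - psum v N.
Proof. induction N; simpl; [ring | rewrite IHN; ring]. Qed.

Lemma psum_scal c u N : psum (fun n => c * u n) N = c * psum u N.
Proof. induction N; simpl; [ring | rewrite IHN; ring]. Qed.

Lemma psum_split u N M : psum u (N + M) = psum u N + psum (fun n => u (N + n)%nat) M.
Proof.
  induction M as [|M IH]; simpl; [rewrite Nat.add_0_r; ring|].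
  rewrite Nat.add_succ_r; simpl. rewrite IH; ring.
Qed.

Lemma psum_mul u v N K : psum u N * psum v K = psum (fun n => psum (fun k => u n * v k) K) N.
Proof. induction N; simpl; [ring|]. rewrite Rmult_plus_distr_r, IHN, <- psum_scal; reflexivity. Qed.

Lemma psum_pairs u N : psum (fun n => u (2 * n)%nat + u (S (2 * n))) N = psum u (2 * N).
Proof.
  induction N as [|N IH]; [reflexivity|].
  replace (2 * S N)%nat with (S (S (2 * N))) by lia. cbn [psum]. rewrite IH. ring.
Qed.

Lemma Rabs_psum_le u N B : (forall n, (n < N)%nat -> Rabs (u n) <= B) -> Rabs (psum u N) <= INR N * B.
Proof.
  induction N as [|N IH]; intros H; simpl psum; [rewrite Rabs_R0; simpl; lra|].
  rewrite S_INR. eapply Rle_trans; [apply Rabs_triang|].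
  pose proof (IH ltac:(intros; apply H; lia)). pose proof (H N ltac:(lia)). lra.
Qed.

Lemma psum_geom z N : z <> 1 -> psum (fun n => z ^ n) N = (1 - z ^ N) / (1 - z).
Proof. intros Hz. induction N; simpl; [field; lra | rewrite IHN; field; lra]. Qed.

Lemma is_derive_psum (g : R -> nat -> R) (dg : nat -> R) x N :
  (forall n, (n < N)%nat -> is_derive (fun y => g y n) x (dg n)) ->
  is_derive (fun y => psum (g y) N) x (psum dg N).
Proof.
  induction N as [|N IH]; intros H; simpl.
  - apply (is_derive_const 0).
  - apply (is_derive_plus (fun y => psum (g y) N) (fun y => g y N)); [apply IH; intros|]; apply H; lia.
Qed.

Lemma is_series_psum u l : is_series u l <-> is_lim_seq (psum u) l.
Proof.
  split; intros H.
  - apply is_lim_seq_incr_1. eapply is_lim_seq_ext; [|exact H]. intros; apply sum_n_psum.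
  - apply is_lim_seq_incr_1 in H. eapply is_lim_seq_ext in H; [exact H|].
    intros; symmetry; apply sum_n_psum.
Qed.

Lemma psum_le_is_series u l N : (forall n, 0 <= u n) -> is_series u l -> psum u N <= l.
Proof.
  intros Hu Hs. apply is_series_psum, (is_lim_seq_incr_n _ N) in Hs.
  apply (is_lim_seq_le (fun _ => psum u N) (fun k => psum u (k + N)) (psum u N) l); auto.
  - intros; apply psum_le_psum; auto; lia.
  - apply is_lim_seq_const.
Qed.

Lemma psum_le_Series u N : (forall n, 0 <= u n) -> ex_series u -> psum u N <= Series u.
Proof. intros Hu [l Hl]. rewrite (is_series_unique _ _ Hl). apply psum_le_is_series; auto. Qed.

Lemma Series_le_psum_tail u w N W :
  (forall n, 0 <= u n) -> ex_series u -> (forall n, 0 <= w n) ->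
  (forall n, u (N + n)%nat <= w n) -> is_series w W -> Series u <= psum u N + W.
Proof.
  intros Hu [l Hl] Hw Huw HW. rewrite (is_series_unique _ _ Hl).
  apply is_series_psum in Hl.
  apply (is_lim_seq_le (psum u) (fun _ => psum u N + W) l (psum u N + W)); auto;
    [|apply is_lim_seq_const].
  intros M. apply Rle_trans with (psum u (N + M)); [apply psum_le_psum; auto; lia|].
  rewrite psum_split. apply Rplus_le_compat_l.
  apply Rle_trans with (psum w M); [apply psum_le; auto | apply psum_le_is_series; auto].
Qed.

Lemma is_series_pairs u : ex_series u ->
  is_series (fun n => u (2 * n)%nat + u (S (2 * n))) (Series u).
Proof.
  intros Hu. apply Series_correct, is_series_psum in Hu. apply is_series_psum.
  eapply is_lim_seq_ext; [intros; symmetry; apply psum_pairs|].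
  apply (is_lim_seq_subseq (psum u) _ (fun n => 2 * n)%nat); auto.
  intros P [M HM]. exists M. intros n Hn. apply HM. lia.
Qed.

Lemma is_series_PSeries a x : Rbar_lt (Rabs x) (CV_radius a) ->
  is_series (fun n => a n * x ^ n) (PSeries a x).
Proof. intros H. apply Series_correct, ex_series_Rabs, CV_disk_inside; auto. Qed.

Lemma pow_le_one x n : 0 <= x <= 1 -> x ^ n <= 1.
Proof. intros H. rewrite <- (pow1 n). apply pow_incr; lra. Qed.

Lemma deriv_le_increment (F H dF dH : R -> R) a b : a <= b ->
  (forall s, a <= s <= b -> is_derive F s (dF s)) ->
  (forall s, a <= s <= b -> is_derive H s (dH s)) ->
  (forall s, a <= s <= b -> dH s <= dF s) ->
  H b - H a <= F b - F a.
Proof.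
  intros Hab HF HH Hd. destruct (Req_dec a b) as [->|Hne]; [lra|].
  assert (HD : forall s, a <= s <= b -> is_derive (fun s => F s - H s) s (dF s - dH s)).
  { intros s Hs. apply (is_derive_minus F H); auto. }
  destruct (MVT_gen (fun s => F s - H s) a b (fun s => dF s - dH s)) as [c [Hc Hm]];
    rewrite Rmin_left, Rmax_right in * by lra.
  - intros s Hs. apply HD; lra.
  - intros s Hs. apply continuity_pt_filterlim, (ex_derive_continuous (fun s => F s - H s)).
    eexists; apply HD; lra.
  - pose proof (Hd c Hc). nra.
Qed.

(** * Partial fraction expansions of 1/sin^2, cot and 1/sin *)

Definition inv_consec (c : R) (n : nat) : R := / ((c + INR n) * (c + INR n + 1)).

Lemma inv_consec_ge0 c n : 0 < c -> 0 <= inv_consec c n.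
Proof. intros; unfold inv_consec. pose proof (pos_INR n). apply Rlt_le, Rinv_0_lt_compat. nra. Qed.

Lemma is_series_inv_consec c : 0 < c -> is_series (inv_consec c) (/ c).
Proof.
  intros Hc. apply is_series_psum.
  assert (E : forall N, psum (inv_consec c) N = / c - / (c + INR N)).
  { induction N as [|N IH]; simpl psum; [simpl; field; lra|].
    rewrite IH. unfold inv_consec. rewrite S_INR. pose proof (pos_INR N). field. lra. }
  eapply is_lim_seq_ext; [intros; symmetry; apply E|].
  replace (Finite (/ c)) with (Rbar_minus (/ c) 0) by (simpl; f_equal; ring).
  apply is_lim_seq_minus'; [apply is_lim_seq_const|].
  apply (is_lim_seq_inv _ p_infty); [|discriminate].
  eapply is_lim_seq_plus; [apply is_lim_seq_const | apply is_lim_seq_INR | simpl; constructor].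
Qed.

Definition csc2_term (x : R) (n : nat) : R := / (x + INR n) ^ 2 + / (1 - x + INR n) ^ 2.
Definition csc2_series (x : R) : R := Series (csc2_term x).

Lemma csc2_term_gt0 x n : 0 < x < 1 -> 0 < csc2_term x n.
Proof.
  intros Hx; unfold csc2_term. pose proof (pos_INR n).
  apply Rplus_lt_0_compat; apply Rinv_0_lt_compat, pow_lt; lra.
Qed.

Lemma csc2_term_tail_le x N n : 0 < x < 1 -> (1 <= N)%nat ->
  csc2_term x (N + n) <= 4 * inv_consec (INR N) n.
Proof.
  intros Hx HN. unfold csc2_term, inv_consec. rewrite plus_INR.
  assert (1 <= INR N) by (apply (le_INR 1); auto). pose proof (pos_INR n).
  set (m := INR N + INR n) in *. assert (Hm : 1 <= m) by (unfold m; lra).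
  assert (/ (x + m) ^ 2 <= 2 * / (m * (m + 1))).
  { apply Rmult_le_reg_l with ((x + m) ^ 2 * (m * (m + 1))); [apply Rmult_lt_0_compat; nra|].
    field_simplify; nra. }
  assert (/ (1 - x + m) ^ 2 <= 2 * / (m * (m + 1))).
  { apply Rmult_le_reg_l with ((1 - x + m) ^ 2 * (m * (m + 1))); [apply Rmult_lt_0_compat; nra|].
    field_simplify; nra. }
  lra.
Qed.

Lemma ex_series_csc2_term x : 0 < x < 1 -> ex_series (csc2_term x).
Proof.
  intros Hx. apply (ex_series_incr_n (csc2_term x) 1).
  apply (@ex_series_le R_AbsRing R_CompleteNormedModule _ (fun n => 4 * inv_consec (INR 1) n)).
  - intros n. change norm with Rabs. rewrite Rabs_pos_eq by (apply Rlt_le, csc2_term_gt0; auto).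
    apply csc2_term_tail_le; auto.
  - exists (4 * / INR 1).
    apply (is_series_scal_l 4 (inv_consec (INR 1))), is_series_inv_consec. simpl; lra.
Qed.

Lemma csc2_series_bounds x N : 0 < x < 1 -> (1 <= N)%nat ->
  psum (csc2_term x) N <= csc2_series x <= psum (csc2_term x) N + 4 / INR N.
Proof.
  intros Hx HN. assert (1 <= INR N) by (apply (le_INR 1); auto).
  assert (Hpos : forall n, 0 <= csc2_term x n) by (intros; apply Rlt_le, csc2_term_gt0; auto).
  split; [apply psum_le_Series; auto; apply ex_series_csc2_term; auto|].
  apply Series_le_psum_tail with (w := fun n => 4 * inv_consec (INR N) n); auto.
  - apply ex_series_csc2_term; auto.
  - intros; pose proof (inv_consec_ge0 (INR N) n ltac:(lra)); lra.
  - intros; apply csc2_term_tail_le; auto.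
  - unfold Rdiv. apply (is_series_scal_l 4 (inv_consec (INR N))), is_series_inv_consec; lra.
Qed.

Lemma csc2_series_dup x : 0 < x < 1 ->
  csc2_series (x / 2) + csc2_series ((x + 1) / 2) = 4 * csc2_series x.
Proof.
  intros Hx. unfold csc2_series.
  rewrite <- Series_plus by (apply ex_series_csc2_term; lra).
  rewrite <- (is_series_unique _ _ (is_series_pairs _ (ex_series_csc2_term x Hx))).
  rewrite <- Series_scal_l. apply Series_ext. intros n. unfold csc2_term.
  rewrite S_INR, mult_INR. simpl INR. pose proof (pos_INR n).
  field. repeat split; nra.
Qed.

(* Herglotz's trick: the duplication formula doubles [|h|] somewhere at every step. *)
Lemma dup_bounded_eq0 (h : R -> R) B :
  (forall x, 0 < x < 1 -> Rabs (h x) <= B) ->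
  (forall x, 0 < x < 1 -> h (x / 2) + h ((x + 1) / 2) = 4 * h x) ->
  forall x, 0 < x < 1 -> h x = 0.
Proof.
  intros HB Hdup x Hx. destruct (Req_dec (h x) 0) as [|Hne]; auto. exfalso.
  set (c := Rabs (h x)). assert (Hc : 0 < c) by (apply Rabs_pos_lt; auto).
  assert (Hgrow : forall k, exists y, 0 < y < 1 /\ 2 ^ k * c <= Rabs (h y)).
  { induction k as [|k [y [Hy Hyk]]]; [exists x; split; auto; simpl; unfold c; lra|].
    assert (4 * Rabs (h y) <= Rabs (h (y / 2)) + Rabs (h ((y + 1) / 2))).
    { replace 4 with (Rabs 4) by (apply Rabs_pos_eq; lra).
      rewrite <- Rabs_mult, <- Hdup by auto. apply Rabs_triang. }
    destruct (Rle_lt_dec (2 * Rabs (h y)) (Rabs (h (y / 2)))).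
    - exists (y / 2). simpl. repeat split; lra.
    - exists ((y + 1) / 2). simpl. repeat split; lra. }
  destruct (INR_archimed c B Hc) as [n Hn].
  destruct (Hgrow n) as [y [Hy Hny]]. pose proof (HB y Hy).
  assert (INR n <= 2 ^ n).
  { clear. induction n as [|n IH]; [simpl; lra|]. rewrite S_INR. simpl.
    pose proof (pow_R1_Rle 2 n ltac:(lra)). lra. }
  nra.
Qed.

Lemma PI_gt_3 : 3 < PI.
Proof. pose proof PI2_3_2; lra. Qed.

Lemma sin_PI_mul_gt0 x : 0 < x < 1 -> 0 < sin (PI * x).
Proof. intros; pose proof PI_gt_3. apply sin_gt_0; nra. Qed.

Lemma sin_bounds y : 0 <= y <= 2 -> y - y ^ 3 / 6 <= sin y <= y.
Proof.
  intros Hy. pose proof PI_gt_3. destruct (SIN y) as [Hlb _]; try lra.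
  unfold sin_lb, sin_approx, sin_term in Hlb. cbn [sum_f_R0 Nat.mul Nat.add] in Hlb.
  assert (F : forall n, INR (Factorial.fact n) = IZR (Z.of_nat (Factorial.fact n)))
    by (intros; apply INR_IZR_INZ).
  rewrite !F in Hlb. simpl in Hlb. split.
  - assert (0 <= y ^ 5 * (42 - y ^ 2)) by (apply Rmult_le_pos; [apply pow_le|]; nra).
    lra.
  - destruct (Req_dec y 0) as [->|Hy0]; [rewrite sin_0; lra|]. apply Rlt_le, sin_lt_x; lra.
Qed.

Lemma inv_sin2_sub_inv_sq_bounds y : 0 < y <= 2 -> 0 <= / sin y ^ 2 - / y ^ 2 <= 3.
Proof.
  intros Hy. destruct (sin_bounds y) as [Hlo Hhi]; [lra|]. set (s := sin y) in *.
  assert (Hs : y / 3 <= s) by nra.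
  replace (/ s ^ 2 - / y ^ 2) with ((y - s) * (y + s) / (s ^ 2 * y ^ 2)) by (field; lra).
  assert (Hp : 0 < s ^ 2 * y ^ 2) by (apply Rmult_lt_0_compat; apply pow_lt; lra).
  split; [apply Rmult_le_pos; [nra | apply Rlt_le, Rinv_0_lt_compat; lra]|].
  apply Rmult_le_reg_r with (s ^ 2 * y ^ 2); [exact Hp|].
  unfold Rdiv. rewrite Rmult_assoc, Rinv_l, Rmult_1_r by lra.
  assert ((y - s) * (y + s) <= y ^ 3 / 6 * (2 * y)) by (apply Rmult_le_compat; lra).
  assert ((y / 3) ^ 2 <= s ^ 2) by (apply pow_incr; lra).
  nra.
Qed.

Lemma pi2_csc2_sub_bounds x : 0 < x < 1 ->
  -4 <= PI ^ 2 / sin (PI * x) ^ 2 - / x ^ 2 - / (1 - x) ^ 2 <= 3 * PI ^ 2.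
Proof.
  assert (Hhalf : forall x, 0 < x <= 1 / 2 ->
    -4 <= PI ^ 2 / sin (PI * x) ^ 2 - / x ^ 2 - / (1 - x) ^ 2 <= 3 * PI ^ 2).
  { intros y Hy. pose proof PI_gt_3. pose proof PI_4. pose proof (sin_PI_mul_gt0 y ltac:(lra)).
    destruct (inv_sin2_sub_inv_sq_bounds (PI * y)) as [A1 A2]; [nra|].
    replace (PI ^ 2 / sin (PI * y) ^ 2 - / y ^ 2)
      with (PI ^ 2 * (/ sin (PI * y) ^ 2 - / (PI * y) ^ 2)) by (field; repeat split; lra).
    assert (1 <= / (1 - y) ^ 2 <= 4).
    { split.
      - rewrite <- Rinv_1. apply Rinv_le_contravar; [apply pow_lt; lra|].
        rewrite <- (pow1 2). apply pow_incr; lra.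
      - replace 4 with (/ (1 / 2) ^ 2) by field.
        apply Rinv_le_contravar; [apply pow_lt; lra | apply pow_incr; lra]. }
    assert (0 <= PI ^ 2 * (/ sin (PI * y) ^ 2 - / (PI * y) ^ 2) <= 3 * PI ^ 2) by (split; nra).
    lra. }
  intros Hx. destruct (Rle_lt_dec x (1 / 2)); [apply Hhalf; lra|].
  replace (sin (PI * x)) with (sin (PI * (1 - x)))
    by (replace (PI * (1 - x)) with (PI - PI * x) by ring; apply sin_PI_x).
  pose proof (Hhalf (1 - x) ltac:(lra)). replace (1 - (1 - x)) with x in * by ring. lra.
Qed.

Definition csc2_defect (x : R) : R := PI ^ 2 / sin (PI * x) ^ 2 - csc2_series x.

Lemma Rabs_csc2_defect_le x : 0 < x < 1 -> Rabs (csc2_defect x) <= 3 * PI ^ 2 + 8.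
Proof.
  intros Hx. destruct (csc2_series_bounds x 1 Hx (le_n 1)) as [T1 T2].
  unfold csc2_term in T1, T2. cbn [psum INR] in T1, T2. rewrite !Rplus_0_r, Rplus_0_l in T1, T2.
  pose proof (pi2_csc2_sub_bounds x Hx). pose proof (pow_le PI 2 ltac:(pose proof PI_gt_3; lra)).
  unfold csc2_defect. apply Rabs_le. lra.
Qed.

Lemma csc2_defect_dup x : 0 < x < 1 ->
  csc2_defect (x / 2) + csc2_defect ((x + 1) / 2) = 4 * csc2_defect x.
Proof.
  intros Hx. unfold csc2_defect. set (a := PI * (x / 2)).
  assert (Hcos : sin (PI * ((x + 1) / 2)) = cos a) by (unfold a; rewrite cos_sin; f_equal; field).
  assert (Hsin : sin (PI * x) = 2 * sin a * cos a) by (unfold a; rewrite <- sin_2a; f_equal; field).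
  assert (Hs : 0 < sin a) by (apply sin_PI_mul_gt0; lra).
  assert (Hc : 0 < cos a) by (rewrite <- Hcos; apply sin_PI_mul_gt0; lra).
  assert (H1 : sin a ^ 2 + cos a ^ 2 = 1) by (rewrite <- (sin2_cos2 a); unfold Rsqr; ring).
  rewrite Hcos, Hsin.
  replace (PI ^ 2 / sin a ^ 2 - csc2_series (x / 2) + (PI ^ 2 / cos a ^ 2 - csc2_series ((x + 1) / 2)))
    with (PI ^ 2 * (sin a ^ 2 + cos a ^ 2) / (sin a ^ 2 * cos a ^ 2)
          - (csc2_series (x / 2) + csc2_series ((x + 1) / 2))) by (field; lra).
  rewrite H1, csc2_series_dup by auto. field. lra.
Qed.

Lemma csc2_series_eq x : 0 < x < 1 -> csc2_series x = PI ^ 2 / sin (PI * x) ^ 2.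
Proof.
  intros Hx. pose proof (dup_bounded_eq0 csc2_defect _ Rabs_csc2_defect_le csc2_defect_dup x Hx).
  unfold csc2_defect in H. lra.
Qed.

Definition cot_term (x : R) (n : nat) : R := / (x + INR n) - / (1 - x + INR n).
Definition pi_cot (x : R) : R := PI * cos (PI * x) / sin (PI * x).

Lemma is_derive_cot_term x n : 0 < x < 1 -> is_derive (fun y => cot_term y n) x (- csc2_term x n).
Proof.
  intros Hx. unfold cot_term, csc2_term. pose proof (pos_INR n).
  auto_derive; [split; lra|]. field. split; lra.
Qed.

Lemma is_derive_pi_cot x : 0 < x < 1 -> is_derive pi_cot x (- (PI ^ 2 / sin (PI * x) ^ 2)).
Proof.
  intros Hx. pose proof (sin_PI_mul_gt0 x Hx). unfold pi_cot.
  auto_derive; [lra|].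
  assert (H1 : sin (PI * x) ^ 2 + cos (PI * x) ^ 2 = 1)
    by (rewrite <- (sin2_cos2 (PI * x)); unfold Rsqr; ring).
  replace (- (PI ^ 2 / sin (PI * x) ^ 2))
    with (- (PI ^ 2 * (sin (PI * x) ^ 2 + cos (PI * x) ^ 2)) / sin (PI * x) ^ 2)
    by (rewrite H1; field; lra).
  field. lra.
Qed.

(* [pi_cot - psum cot_term] vanishes at 1/2, and by [csc2_series_bounds] its derivative
   is [4/N]-small. *)
Lemma Rabs_pi_cot_sub_psum_le x N : 0 < x < 1 -> (1 <= N)%nat ->
  Rabs (pi_cot x - psum (cot_term x) N) <= 2 / INR N.
Proof.
  intros Hx HN. assert (HN' : 1 <= INR N) by (apply (le_INR 1); auto).
  set (E := fun y => pi_cot y - psum (cot_term y) N).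
  set (dE := fun y => - (PI ^ 2 / sin (PI * y) ^ 2) - psum (fun n => - csc2_term y n) N).
  assert (HD : forall y, 0 < y < 1 -> is_derive E y (dE y)).
  { intros y Hy. apply (is_derive_minus pi_cot (fun y => psum (cot_term y) N)).
    - apply is_derive_pi_cot; auto.
    - apply (is_derive_psum cot_term). intros; apply is_derive_cot_term; auto. }
  assert (Hbetween : forall y, Rmin (1 / 2) x <= y <= Rmax (1 / 2) x -> 0 < y < 1).
  { intros y Hy. pose proof (Rmin_glb_lt (1 / 2) x 0); pose proof (Rmax_lub_lt (1 / 2) x 1). lra. }
  assert (E0 : E (1 / 2) = 0).
  { unfold E, pi_cot. replace (PI * (1 / 2)) with (PI / 2) by field.
    rewrite cos_PI2, (psum_ext _ (fun _ => 0)), psum_const0; [unfold Rdiv; ring|].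
    intros n _. unfold cot_term. replace (1 - 1 / 2) with (1 / 2) by field. ring. }
  destruct (MVT_gen E (1 / 2) x dE) as [c [Hc Hmvt]].
  - intros y Hy. apply HD, Hbetween; lra.
  - intros y Hy. apply continuity_pt_filterlim, (ex_derive_continuous E).
    eexists; apply HD, Hbetween; auto.
  - pose proof (Hbetween c Hc) as Hc'. rewrite E0, Rminus_0_r in Hmvt.
    change (Rabs (E x) <= 2 / INR N). rewrite Hmvt, Rabs_mult.
    destruct (csc2_series_bounds c N Hc' HN) as [T1 T2]. rewrite csc2_series_eq in T1, T2 by auto.
    assert (HdE : Rabs (dE c) <= 4 / INR N).
    { unfold dE. rewrite (psum_ext _ (fun n => -1 * csc2_term c n)) by (intros; ring).
      rewrite psum_scal. apply Rabs_le. lra. }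
    assert (Rabs (x - 1 / 2) <= 1 / 2) by (apply Rabs_le; lra).
    replace (2 / INR N) with (4 / INR N * (1 / 2)) by (field; lra).
    apply Rmult_le_compat; auto; apply Rabs_pos.
Qed.

Definition csc_term (al : R) (m : nat) : R := (-1) ^ m * (/ (INR m + al) + / (INR m + (1 - al))).

Lemma psum_csc_term al N : 0 < al < 1 ->
  psum (csc_term al) (2 * N) = psum (cot_term (al / 2)) N - psum (cot_term al) (2 * N).
Proof.
  intros Ha. rewrite <- !psum_pairs, <- psum_sub.
  apply psum_ext. intros n _. unfold csc_term, cot_term.
  rewrite pow_1_even, pow_1_odd, S_INR, mult_INR. simpl INR. pose proof (pos_INR n).
  field. repeat split; lra.
Qed.

Lemma pi_csc_cot al : 0 < al < 1 -> PI / sin (PI * al) = pi_cot (al / 2) - pi_cot al.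
Proof.
  intros Ha. unfold pi_cot. set (a := PI * (al / 2)).
  assert (Hs : 0 < sin a) by (apply sin_PI_mul_gt0; lra).
  assert (Hc : 0 < cos a).
  { replace (cos a) with (sin (PI * ((al + 1) / 2))) by (unfold a; rewrite cos_sin; f_equal; field).
    apply sin_PI_mul_gt0; lra. }
  replace (PI * al) with (2 * a) by (unfold a; field).
  rewrite sin_2a, cos_2a_cos. field. lra.
Qed.

Lemma Rabs_psum_csc_term_sub_le al N : 0 < al < 1 -> (1 <= N)%nat ->
  Rabs (psum (csc_term al) (2 * N) - PI / sin (PI * al)) <= 3 / INR N.
Proof.
  intros Ha HN. assert (HN' : 1 <= INR N) by (apply (le_INR 1); auto).
  rewrite psum_csc_term, pi_csc_cot by auto.
  pose proof (Rabs_pi_cot_sub_psum_le (al / 2) N ltac:(lra) HN) as H1.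
  pose proof (Rabs_pi_cot_sub_psum_le al (2 * N) Ha ltac:(lia)) as H2.
  rewrite mult_INR in H2. simpl INR in H2.
  replace (3 / INR N) with (2 / INR N + 2 / ((1 + 1) * INR N)) by (field; lra).
  eapply Rle_trans; [|apply Rplus_le_compat; [apply H1 | apply H2]].
  rewrite <- Rabs_Ropp with (x := pi_cot (al / 2) - _). apply Rle_trans with (2 := Rabs_triang _ _).
  right; f_equal; ring.
Qed.

(** * The binomial series of (1 - x)^(-al) *)

Fixpoint negbinom (al : R) (k : nat) : R :=
  match k with O => 1 | S k => negbinom al k * (INR k + al) / (INR k + 1) end.

Lemma negbinom_succ al k : INR (S k) * negbinom al (S k) = (INR k + al) * negbinom al k.
Proof. simpl negbinom. rewrite S_INR. pose proof (pos_INR k). field. lra. Qed.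

Section NegBinom.
Variable al : R.
Hypothesis Hal : 0 < al < 1.

Lemma negbinom_bounds k : 0 < negbinom al k <= 1.
Proof.
  induction k as [|k IH]; simpl; [lra|]. pose proof (pos_INR k).
  assert (0 < (INR k + al) / (INR k + 1) <= 1).
  { split; [apply Rdiv_lt_0_compat; lra|].
    apply Rmult_le_reg_r with (INR k + 1); [lra|].
    unfold Rdiv; rewrite Rmult_assoc, Rinv_l by lra. lra. }
  unfold Rdiv in *. rewrite Rmult_assoc. split; [apply Rmult_lt_0_compat|]; nra.
Qed.

Lemma negbinom_term_ge0 x k : 0 <= x -> 0 <= negbinom al k * x ^ k.
Proof. intros. pose proof (negbinom_bounds k). pose proof (pow_le x k H). nra. Qed.

Lemma CV_radius_negbinom x : Rabs x < 1 -> Rbar_lt (Rabs x) (CV_radius (negbinom al)).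
Proof.
  assert (Hdisk : forall y, Rabs y < 1 -> CV_disk (negbinom al) y).
  { intros y Hy.
    apply (@ex_series_le R_AbsRing R_CompleteNormedModule _ (fun n => Rabs y ^ n)).
    - intros n. change norm with Rabs. simpl.
      rewrite Rabs_Rabsolu, Rabs_mult, <- RPow_abs.
      destruct (negbinom_bounds n). rewrite Rabs_pos_eq by lra.
      pose proof (pow_le (Rabs y) n (Rabs_pos y)). nra.
    - exists (/ (1 - Rabs y)). apply is_series_geom. rewrite Rabs_Rabsolu; auto. }
  intros Hx. set (y := (Rabs x + 1) / 2). pose proof (Rabs_pos x).
  assert (Hy : CV_disk (negbinom al) y) by (apply Hdisk; unfold y; rewrite Rabs_pos_eq; lra).
  destruct (Lub_Rbar_correct (CV_disk (negbinom al))) as [Hub _].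
  specialize (Hub y Hy). unfold CV_radius.
  destruct (Lub_Rbar (CV_disk (negbinom al))); simpl in *; auto. unfold y in Hub. lra.
Qed.

(* The differential equation satisfied by [(1 - x)^(-al)]. *)
Lemma PSeries_negbinom_ode x : Rabs x < 1 ->
  (1 - x) * PSeries (PS_derive (negbinom al)) x = al * PSeries (negbinom al) x.
Proof.
  intros Hx. set (a := negbinom al).
  set (p := fun n => a n * x ^ n). set (d := fun n => PS_derive a n * x ^ n).
  assert (Hid : forall N, (1 - x) * psum d N = al * psum p N - INR N * a N * x ^ N).
  { induction N as [|N IH]; [simpl; ring|].
    simpl psum. rewrite Rmult_plus_distr_l, IH. unfold d, p, PS_derive.
    pose proof (negbinom_succ al N) as Hs. fold a in Hs. rewrite S_INR in *.
    replace (x ^ S N) with (x * x ^ N) by (simpl; ring).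
    rewrite Hs. ring. }
  assert (Hr : Rbar_lt (Rabs x) (CV_radius a)) by (apply CV_radius_negbinom; auto).
  assert (Hrd : Rbar_lt (Rabs x) (CV_radius (PS_derive a))) by (rewrite CV_radius_derive; auto).
  pose proof (is_series_PSeries a x Hr) as Hp. pose proof (is_series_PSeries _ x Hrd) as Hd.
  apply is_series_psum in Hp. apply is_series_psum in Hd.
  assert (Hw : is_lim_seq (fun N => INR N * a N * x ^ N) 0).
  { apply is_lim_seq_incr_1.
    assert (Hd0 : is_lim_seq d 0) by (apply ex_series_lim_0; eexists; apply is_series_psum; exact Hd).
    apply (is_lim_seq_scal_l _ x) in Hd0. simpl in Hd0. rewrite Rmult_0_r in Hd0.
    eapply is_lim_seq_ext; [|exact Hd0]. intros n. unfold d, PS_derive. simpl pow. ring. }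
  assert (L1 := is_lim_seq_scal_l _ (1 - x) _ Hd). simpl in L1.
  assert (L2 := is_lim_seq_minus' _ _ _ _ (is_lim_seq_scal_l _ al _ Hp) Hw). simpl in L2.
  apply is_lim_seq_unique in L1. apply is_lim_seq_unique in L2.
  assert (E : Finite ((1 - x) * PSeries (PS_derive a) x) = Finite (al * PSeries a x - 0)).
  { rewrite <- L1, <- L2. apply Lim_seq_ext. intros; apply Hid. }
  injection E; intros; lra.
Qed.

Lemma PSeries_negbinom x : 0 <= x < 1 -> PSeries (negbinom al) x = Rpower (1 - x) (- al).
Proof.
  intros Hx. set (a := negbinom al).
  set (g := fun y => exp (al * ln (1 - y)) * PSeries a y).
  assert (Hg : forall y, -1 < y < 1 -> is_derive g y 0).
  { intros y Hy. assert (Hr : Rbar_lt (Rabs y) (CV_radius a))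
      by (apply CV_radius_negbinom, Rabs_def1; lra).
    assert (H1 : is_derive (fun y => exp (al * ln (1 - y))) y
                   (exp (al * ln (1 - y)) * (al * (-1 / (1 - y)))))
      by (auto_derive; [lra | replace (1 + - y) with (1 - y) by ring; field; lra]).
    pose proof (is_derive_mult _ _ _ _ _ H1 (is_derive_PSeries a y Hr) (fun n m => Rmult_comm n m)) as H3.
    unfold mult, plus in H3; simpl in H3.
    replace 0 with (exp (al * ln (1 - y)) * (al * (-1 / (1 - y))) * PSeries a y
                    + exp (al * ln (1 - y)) * PSeries (PS_derive a) y); [exact H3|].
    pose proof (PSeries_negbinom_ode y ltac:(apply Rabs_def1; lra)) as Hode. fold a in Hode.
    apply Rmult_eq_reg_r with (1 - y); [|lra].
    transitivity (exp (al * ln (1 - y)) * ((1 - y) * PSeries (PS_derive a) y - al * PSeries a y));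
      [field; lra | rewrite Hode; ring]. }
  assert (Heq : g x = g 0).
  { destruct (Req_dec x 0) as [->|Hx0]; auto.
    destruct (MVT_gen g 0 x (fun _ => 0)) as [c [Hc E]]; rewrite ?Rmin_left, ?Rmax_right in * by lra.
    - intros y Hy. apply Hg. lra.
    - intros y Hy. apply continuity_pt_filterlim, (ex_derive_continuous g). eexists; apply Hg; lra.
    - lra. }
  unfold g in Heq. rewrite PSeries_0, Rminus_0_r, ln_1, Rmult_0_r, exp_0, Rmult_1_l in Heq.
  change (a 0%nat) with 1 in Heq.
  unfold Rpower. apply Rmult_eq_reg_l with (exp (al * ln (1 - x))); [|apply Rgt_not_eq, exp_pos].
  rewrite Heq, <- exp_plus. replace (al * ln (1 - x) + - al * ln (1 - x)) with 0 by ring.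
  rewrite exp_0; reflexivity.
Qed.

End NegBinom.

(** * The Hilbert transform of (1 - z)^(-al) near z = 1 *)

Lemma Rpower_gt0 x y : 0 < Rpower x y.
Proof. apply exp_pos. Qed.

Lemma even_alt_geom_le z M : 0 <= z -> psum (fun m => (- z) ^ m) (2 * M) <= / (1 + z).
Proof.
  intros Hz. rewrite psum_geom by lra. replace (1 - - z) with (1 + z) by ring.
  replace ((- z) ^ (2 * M)) with (z ^ (2 * M)) by (rewrite !pow_mult; f_equal; ring).
  pose proof (pow_le z (2 * M) Hz). unfold Rdiv.
  rewrite <- (Rmult_1_l (/ (1 + z))) at 2.
  apply Rmult_le_compat_r; [apply Rlt_le, Rinv_0_lt_compat|]; lra.
Qed.

Lemma inv_add_ge_alt_psum E v w M : 0 < E -> 0 < v -> 0 < w ->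
  psum (fun m => (-1) ^ m * w ^ m * E / v ^ (m + 1)) (2 * M) <= E / (v + w).
Proof.
  intros HE Hv Hw.
  assert (H := even_alt_geom_le (w / v) M ltac:(apply Rlt_le, Rdiv_lt_0_compat; lra)).
  replace (E / (v + w)) with (E / v * / (1 + w / v)) by (field; lra).
  rewrite (psum_ext _ (fun m => E / v * (- (w / v)) ^ m)), psum_scal.
  - apply Rmult_le_compat_l; [apply Rlt_le, Rdiv_lt_0_compat; lra | exact H].
  - intros m _. replace (- (w / v)) with (-1 * (w / v)) by ring.
    rewrite !Rpow_mult_distr, pow_add. unfold Rdiv. rewrite Rpow_mult_distr, pow_inv.
    field; repeat split; try apply pow_nonzero; lra.
Qed.

Section HilbertTruncation.
Variable al : R.
Hypothesis Hal : 0 < al < 1.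

(* Up to the factor 2^(-al), a partial sum of H f (r) for f(z) = 2^(-al) (1 - z)^(-al). *)
Definition hilbert_trunc (r : R) (N K : nat) : R :=
  psum (fun n => psum (fun k => negbinom al k * r ^ n / (INR n + INR k + 1)) K) N.

(* The primitive of [s |-> sum_k a_k s^k * sum_n (r s)^n], whose integral over [0, 1] is
   [hilbert_trunc r N K]. *)
Definition hilbert_prim (r : R) (N K : nat) (s : R) : R :=
  psum (fun n => psum (fun k => negbinom al k * r ^ n * (s ^ (n + k + 1) / (INR n + INR k + 1))) K) N.

Lemma hilbert_trunc_ge0 r N K : 0 <= r -> 0 <= hilbert_trunc r N K.
Proof.
  intros Hr. apply psum_ge0. intros n. apply psum_ge0. intros k.
  destruct (negbinom_bounds al Hal k). pose proof (pow_le r n Hr).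
  pose proof (pos_INR n). pose proof (pos_INR k).
  apply Rmult_le_pos; [nra | apply Rlt_le, Rinv_0_lt_compat; lra].
Qed.

Lemma is_derive_hilbert_prim r N K s :
  is_derive (hilbert_prim r N K) s
    (psum (fun k => negbinom al k * s ^ k) K * psum (fun n => (r * s) ^ n) N).
Proof.
  rewrite Rmult_comm, psum_mul.
  apply (is_derive_psum (fun s n => psum (fun k => negbinom al k * r ^ n *
           (s ^ (n + k + 1) / (INR n + INR k + 1))) K)). intros n _.
  apply (is_derive_psum (fun s k => negbinom al k * r ^ n * (s ^ (n + k + 1) / (INR n + INR k + 1)))).
  intros k _. pose proof (pos_INR n). pose proof (pos_INR k).
  auto_derive; [lra|]. rewrite Rpow_mult_distr.
  replace (n + k + 1)%nat with (S (n + k)) by lia. simpl pred.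
  rewrite S_INR, plus_INR, pow_add. field. lra.
Qed.

Lemma hilbert_prim_0 r N K : hilbert_prim r N K 0 = 0.
Proof.
  unfold hilbert_prim. rewrite (psum_ext _ (fun _ => 0)); [apply psum_const0|].
  intros n _. rewrite (psum_ext _ (fun _ => 0)); [apply psum_const0|].
  intros k _. rewrite Nat.add_1_r, pow_i by lia. unfold Rdiv; ring.
Qed.

Lemma hilbert_prim_le_1 r N K s : 0 < r -> 0 <= s <= 1 -> hilbert_prim r N K s <= hilbert_trunc r N K.
Proof.
  intros Hr Hs. apply psum_le; intros n _. apply psum_le; intros k _.
  pose proof (pos_INR n). pose proof (pos_INR k). destruct (negbinom_bounds al Hal k).
  pose proof (pow_lt r n Hr). pose proof (pow_le_one s (n + k + 1) Hs).
  unfold Rdiv. rewrite <- Rmult_assoc, Rmult_assoc.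
  apply Rmult_le_compat_l; [apply Rmult_le_pos; lra|].
  rewrite <- (Rmult_1_l (/ _)) at 2. apply Rmult_le_compat_r; [apply Rlt_le, Rinv_0_lt_compat|]; lra.
Qed.

Lemma psum_negbinom_ge K s : 0 <= s < 1 ->
  Rpower (1 - s) (- al) - s ^ K / (1 - s) <= psum (fun k => negbinom al k * s ^ k) K.
Proof.
  intros Hs. rewrite <- PSeries_negbinom by auto.
  assert (Hr : Rbar_lt (Rabs s) (CV_radius (negbinom al)))
    by (apply CV_radius_negbinom; auto; rewrite Rabs_pos_eq; lra).
  enough (PSeries (negbinom al) s <= psum (fun k => negbinom al k * s ^ k) K + s ^ K / (1 - s)) by lra.
  apply Series_le_psum_tail with (w := fun n => s ^ K * s ^ n).
  - intros; apply negbinom_term_ge0; lra.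
  - eexists; apply is_series_PSeries; auto.
  - intros n. apply Rmult_le_pos; apply pow_le; lra.
  - intros n. rewrite pow_add. destruct (negbinom_bounds al Hal (K + n)).
    pose proof (Rmult_le_pos _ _ (pow_le s K ltac:(lra)) (pow_le s n ltac:(lra))). nra.
  - apply (is_series_scal_l (s ^ K) (fun n => s ^ n)), is_series_geom. rewrite Rabs_pos_eq; lra.
Qed.

Variable d : R.
Hypothesis Hd : 0 < d < 1.

Lemma hilbert_integrand_ge N K s eta : 0 < eta <= d -> 0 <= s <= 1 - eta ->
  (1 - (1 - d) ^ N) * (Rpower (1 - s) (- al) / (d + (1 - s))) - (1 - eta) ^ K / eta / d
  <= psum (fun k => negbinom al k * s ^ k) K * psum (fun n => ((1 - d) * s) ^ n) N.
Proof.
  intros He Hs. set (E := Rpower (1 - s) (- al)). set (c := 1 - (1 - d) ^ N).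
  set (t := (1 - eta) ^ K / eta). set (v := 1 - (1 - d) * s).
  assert (HE : 0 < E) by apply Rpower_gt0.
  assert (Hc : 0 <= c <= 1) by (pose proof (pow_le (1 - d) N ltac:(lra));
    pose proof (pow_le_one (1 - d) N ltac:(lra)); unfold c; lra).
  assert (Hv : d <= v <= d + (1 - s)) by (unfold v; nra).
  assert (HP := psum_negbinom_ge K s ltac:(lra)). fold E in HP.
  assert (Ht : s ^ K / (1 - s) <= t).
  { apply Rmult_le_compat; [apply pow_le; lra | apply Rlt_le, Rinv_0_lt_compat; lra | |].
    - apply pow_incr; lra.
    - apply Rinv_le_contravar; lra. }
  assert (HQ : c / v <= psum (fun n => ((1 - d) * s) ^ n) N).
  { rewrite psum_geom by nra. pose proof (pow_incr ((1 - d) * s) (1 - d) N ltac:(nra)).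
    apply Rmult_le_compat_r; [apply Rlt_le, Rinv_0_lt_compat|]; unfold c, v in *; lra. }
  assert (HP0 : 0 <= psum (fun k => negbinom al k * s ^ k) K)
    by (apply psum_ge0; intros; apply negbinom_term_ge0; lra).
  assert (Ht0 : 0 <= t) by (apply Rmult_le_pos; [apply pow_le | apply Rlt_le, Rinv_0_lt_compat]; lra).
  apply Rle_trans with ((E - t) * (c / v)).
  2:{ apply Rle_trans with (psum (fun k => negbinom al k * s ^ k) K * (c / v)).
      - apply Rmult_le_compat_r; [apply Rmult_le_pos; [|apply Rlt_le, Rinv_0_lt_compat]|]; lra.
      - apply Rmult_le_compat_l; auto. }
  assert (c * (E / (d + (1 - s))) <= c * (E / v)).
  { apply Rmult_le_compat_l; [lra|]. apply Rmult_le_compat_l; [lra|]. apply Rinv_le_contravar; lra. }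
  assert (t * (c / v) <= t / d).
  { apply Rmult_le_compat_l; [lra|]. apply Rle_trans with (/ v).
    - unfold Rdiv. rewrite <- (Rmult_1_l (/ v)) at 2.
      apply Rmult_le_compat_r; [apply Rlt_le, Rinv_0_lt_compat|]; lra.
    - apply Rinv_le_contravar; lra. }
  replace ((E - t) * (c / v)) with (c * (E / v) - t * (c / v)) by (field; lra).
  unfold t in *. lra.
Qed.

(* Termwise primitives of the even partial sums of [u^(-al) / (d + u)], [u = 1 - s], expanded
   in powers of [u / d] for [u <= d] (near) and of [d / u] for [u >= d] (far). *)
Definition near_prim (M : nat) (s : R) : R :=
  psum (fun m => - ((-1) ^ m * (1 - s) ^ (m + 1) * Rpower (1 - s) (- al)
                     / ((INR m + (1 - al)) * d ^ (m + 1)))) (2 * M).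
Definition far_prim (M : nat) (s : R) : R :=
  psum (fun m => (-1) ^ m * d ^ m * Rpower (1 - s) (- al) / ((INR m + al) * (1 - s) ^ m)) (2 * M).

Lemma is_derive_near_prim M s : s < 1 ->
  is_derive (near_prim M) s
    (psum (fun m => (-1) ^ m * (1 - s) ^ m * Rpower (1 - s) (- al) / d ^ (m + 1)) (2 * M)).
Proof.
  intros Hs. apply (is_derive_psum (fun s m => - ((-1) ^ m * (1 - s) ^ (m + 1) * Rpower (1 - s) (- al)
                     / ((INR m + (1 - al)) * d ^ (m + 1))))).
  intros m _. unfold Rpower. pose proof (pos_INR m).
  auto_derive; [lra|].
  replace (m + 1)%nat with (S m) by lia. simpl pred. rewrite S_INR.
  replace (1 + - s) with (1 - s) by ring. simpl pow.
  field. repeat split; try lra. apply pow_nonzero; lra.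
Qed.

Lemma is_derive_far_prim M s : s < 1 ->
  is_derive (far_prim M) s
    (psum (fun m => (-1) ^ m * d ^ m * Rpower (1 - s) (- al) / (1 - s) ^ (m + 1)) (2 * M)).
Proof.
  intros Hs. apply (is_derive_psum (fun s m => (-1) ^ m * d ^ m * Rpower (1 - s) (- al)
                     / ((INR m + al) * (1 - s) ^ m))).
  intros m _. unfold Rpower. pose proof (pos_INR m).
  auto_derive.
  - repeat split; try lra. apply Rmult_integral_contrapositive. split; [lra | apply pow_nonzero; lra].
  - replace (1 + - s) with (1 - s) by ring.
    destruct m as [|m]; [simpl; field; lra|].
    simpl pred. rewrite S_INR, Nat.add_1_r. simpl pow. rewrite S_INR in *.
    field. split; [apply pow_nonzero|]; lra.
Qed.

Lemma hilbert_prim_increment_ge N K eta (G dG : R -> R) a b :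
  0 < eta <= d -> 0 <= a <= b -> b <= 1 - eta ->
  (forall s, a <= s <= b -> is_derive G s (dG s)) ->
  (forall s, a <= s <= b -> dG s <= Rpower (1 - s) (- al) / (d + (1 - s))) ->
  (1 - (1 - d) ^ N) * (G b - G a) - (1 - eta) ^ K / eta / d * (b - a)
  <= hilbert_prim (1 - d) N K b - hilbert_prim (1 - d) N K a.
Proof.
  intros He Hab Hb HG Hg. set (c := 1 - (1 - d) ^ N). set (t := (1 - eta) ^ K / eta / d).
  assert (Hc : 0 <= c) by (pose proof (pow_le_one (1 - d) N ltac:(lra)); unfold c; lra).
  replace (c * (G b - G a) - t * (b - a)) with ((c * G b - t * b) - (c * G a - t * a)) by ring.
  eapply (deriv_le_increment _ (fun s => c * G s - t * s) _ (fun s => c * dG s - t * 1)); [lra | | |].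
  - intros; apply is_derive_hilbert_prim.
  - intros s Hs. apply (is_derive_minus (fun s => c * G s) (fun s => t * s)).
    + apply (is_derive_scal G), HG; auto.
    + apply (is_derive_scal (fun s => s) s t), (is_derive_id s).
  - intros s Hs. eapply Rle_trans; [|apply hilbert_integrand_ge with (eta := eta); split; lra].
    rewrite Rmult_1_r. apply Rplus_le_compat_r, Rmult_le_compat_l; auto.
Qed.

Lemma hilbert_trunc_ge_prims N K M eta : 0 < eta <= d ->
  (1 - (1 - d) ^ N) * ((near_prim M (1 - eta) - near_prim M (1 - d)) + (far_prim M (1 - d) - far_prim M 0))
  - (1 - eta) ^ K / eta / d <= hilbert_trunc (1 - d) N K.
Proof.
  intros He. set (t := (1 - eta) ^ K / eta / d).
  assert (Ht : 0 <= t).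
  { unfold t, Rdiv. pose proof (pow_le (1 - eta) K ltac:(lra)).
    pose proof (Rinv_0_lt_compat eta ltac:(lra)). pose proof (Rinv_0_lt_compat d ltac:(lra)).
    apply Rmult_le_pos; [apply Rmult_le_pos|]; lra. }
  assert (HE : forall s, s < 1 -> 0 < Rpower (1 - s) (- al)) by (intros; apply Rpower_gt0).
  pose proof (hilbert_prim_le_1 (1 - d) N K (1 - eta) ltac:(lra) ltac:(lra)).
  assert (Hnear : (1 - (1 - d) ^ N) * (near_prim M (1 - eta) - near_prim M (1 - d))
                  - t * (1 - eta - (1 - d))
                  <= hilbert_prim (1 - d) N K (1 - eta) - hilbert_prim (1 - d) N K (1 - d)).
  { eapply hilbert_prim_increment_ge; [exact He | lra | lra | |].
    - intros s Hs. apply is_derive_near_prim. lra.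
    - intros s Hs. apply inv_add_ge_alt_psum; [apply HE|..]; lra. }
  assert (Hfar : (1 - (1 - d) ^ N) * (far_prim M (1 - d) - far_prim M 0) - t * (1 - d - 0)
                 <= hilbert_prim (1 - d) N K (1 - d) - hilbert_prim (1 - d) N K 0).
  { eapply hilbert_prim_increment_ge; [exact He | lra | lra | |].
    - intros s Hs. apply is_derive_far_prim. lra.
    - intros s Hs. rewrite Rplus_comm. apply inv_add_ge_alt_psum; [apply HE|..]; lra. }
  rewrite hilbert_prim_0 in Hfar. assert (t * (1 - eta) <= t) by nra. lra.
Qed.

Lemma Rpower_mul_opp x y : 0 < x -> Rpower x y * Rpower x (- y) = 1.
Proof. intros. rewrite Rpower_Ropp. field. apply Rgt_not_eq, Rpower_gt0. Qed.

(* At [u = d] both expansions meet, and their difference is the alternating series of [csc_term]. *)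
Lemma far_sub_near_prim M :
  far_prim M (1 - d) - near_prim M (1 - d) = Rpower d (- al) * psum (csc_term al) (2 * M).
Proof.
  unfold far_prim, near_prim. rewrite <- psum_sub, <- psum_scal. apply psum_ext. intros m _.
  replace (1 - (1 - d)) with d by ring. unfold csc_term. pose proof (pos_INR m).
  pose proof (pow_nonzero d m ltac:(lra)). rewrite pow_add. simpl pow.
  field. repeat split; lra.
Qed.

Lemma Rabs_near_prim_le M :
  Rabs (Rpower d al * near_prim M (1 - d * d)) <= INR (2 * M) * (Rpower d (1 - al) / (1 - al)).
Proof.
  unfold near_prim. rewrite <- psum_scal. apply Rabs_psum_le. intros m _. pose proof (pos_INR m).
  replace (1 - (1 - d * d)) with (d * d) by ring.
  set (p := Rpower d (- al)).
  assert (Hp : 0 < p) by apply Rpower_gt0.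
  assert (Hq : Rpower d al = / p) by (unfold p; rewrite Rpower_Ropp, Rinv_inv; reflexivity).
  assert (Hpp : Rpower (d * d) (- al) = p * p) by (unfold p; rewrite Rpower_mult_distr; lra).
  assert (Hd1 : Rpower d (1 - al) = d * p)
    by (unfold p; replace (1 - al) with (1 + - al) by ring; rewrite Rpower_plus, Rpower_1 by lra; reflexivity).
  rewrite Hq, Hpp, Hd1, Rpow_mult_distr, !pow_add, pow_1.
  replace (/ p * - ((-1) ^ m * (d ^ m * d * (d ^ m * d)) * (p * p) / ((INR m + (1 - al)) * (d ^ m * d))))
    with (- ((-1) ^ m) * (d ^ m * (d * p / (INR m + (1 - al)))))
    by (field; repeat split; try apply pow_nonzero; lra).
  rewrite Rabs_mult, Rabs_Ropp, pow_1_abs, Rmult_1_l, Rabs_pos_eq.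
  2: { apply Rmult_le_pos; [apply pow_le; lra|]. apply Rmult_le_pos; [nra|].
       apply Rlt_le, Rinv_0_lt_compat; lra. }
  rewrite <- (Rmult_1_l (d * p / (1 - al))).
  apply Rmult_le_compat; [apply pow_le; lra | | apply pow_le_one; lra |].
  - apply Rmult_le_pos; [nra | apply Rlt_le, Rinv_0_lt_compat; lra].
  - apply Rmult_le_compat_l; [nra|]. apply Rinv_le_contravar; lra.
Qed.

Lemma Rabs_far_prim_le M : Rabs (Rpower d al * far_prim M 0) <= INR (2 * M) * (Rpower d al / al).
Proof.
  unfold far_prim. rewrite <- psum_scal. apply Rabs_psum_le. intros m _. pose proof (pos_INR m).
  pose proof (Rpower_gt0 d al) as Hp.
  rewrite Rminus_0_r, pow1, Rmult_1_r.
  replace (Rpower 1 (- al)) with 1 by (unfold Rpower; rewrite ln_1, Rmult_0_r, exp_0; reflexivity).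
  replace (Rpower d al * ((-1) ^ m * d ^ m * 1 / (INR m + al)))
    with ((-1) ^ m * (d ^ m * (Rpower d al / (INR m + al)))) by (field; lra).
  rewrite Rabs_mult, pow_1_abs, Rmult_1_l, Rabs_pos_eq.
  2: { apply Rmult_le_pos; [apply pow_le; lra | apply Rlt_le, Rdiv_lt_0_compat; lra]. }
  rewrite <- (Rmult_1_l (Rpower d al / al)).
  apply Rmult_le_compat; [apply pow_le; lra | apply Rlt_le, Rdiv_lt_0_compat; lra
                         | apply pow_le_one; lra |].
  apply Rmult_le_compat_l; [lra|]. apply Rinv_le_contravar; lra.
Qed.

Lemma hilbert_trunc_ge N K M :
  (1 - (1 - d) ^ N) * (psum (csc_term al) (2 * M)
                       - INR (2 * M) * (Rpower d (1 - al) / (1 - al) + Rpower d al / al))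
  - Rpower d al * ((1 - d * d) ^ K / (d * d) / d)
  <= Rpower d al * hilbert_trunc (1 - d) N K.
Proof.
  pose proof (hilbert_trunc_ge_prims N K M (d * d) ltac:(split; nra)) as Htrunc.
  pose proof (far_sub_near_prim M) as Hmid.
  pose proof (Rabs_near_prim_le M) as Hnear. pose proof (Rabs_far_prim_le M) as Hfar.
  apply Rabs_le_between in Hnear, Hfar.
  set (p := Rpower d al) in *. assert (Hp : 0 < p) by apply Rpower_gt0.
  assert (Hpm : p * Rpower d (- al) = 1) by (apply Rpower_mul_opp; lra).
  assert (Hc : 0 <= 1 - (1 - d) ^ N <= 1)
    by (pose proof (pow_le (1 - d) N ltac:(lra)); pose proof (pow_le_one (1 - d) N ltac:(lra)); lra).
  apply Rmult_le_compat_l with (r := p) in Htrunc; [|lra].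
  eapply Rle_trans; [|exact Htrunc].
  replace (near_prim M (1 - d * d) - near_prim M (1 - d) + (far_prim M (1 - d) - far_prim M 0))
    with (Rpower d (- al) * psum (csc_term al) (2 * M) + near_prim M (1 - d * d) - far_prim M 0) by lra.
  set (c := 1 - (1 - d) ^ N) in *. set (S := psum (csc_term al) (2 * M)) in *.
  set (T := (1 - d * d) ^ K / (d * d) / d).
  replace (p * (c * (Rpower d (- al) * S + near_prim M (1 - d * d) - far_prim M 0) - T))
    with (c * ((p * Rpower d (- al)) * S + p * near_prim M (1 - d * d) - p * far_prim M 0) - p * T)
    by ring.
  rewrite Hpm. apply Rplus_le_compat_r, Rmult_le_compat_l; lra.
Qed.

(* Letting [N = K] tend to infinity in [hilbert_trunc_ge]. *)
Lemma hilbert_trunc_bounded_ge M w y : 0 <= w ->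
  (forall N K, w * (Rpower d al * hilbert_trunc (1 - d) N K) <= y) ->
  w * (psum (csc_term al) (2 * M)
       - INR (2 * M) * (Rpower d (1 - al) / (1 - al) + Rpower d al / al)) <= y.
Proof.
  intros Hw Hy.
  set (L := psum (csc_term al) (2 * M) - INR (2 * M) * (Rpower d (1 - al) / (1 - al) + Rpower d al / al)).
  assert (Hgeom : forall x, 0 <= x < 1 -> is_lim_seq (fun N => x ^ N) 0)
    by (intros; apply is_lim_seq_geom; rewrite Rabs_pos_eq; lra).
  assert (Hlim : is_lim_seq (fun N => w * ((1 - (1 - d) ^ N) * L
                   - Rpower d al * ((1 - d * d) ^ N / (d * d) / d)))
                 (w * ((1 - 0) * L - Rpower d al * (0 / (d * d) / d)))).
  { apply is_lim_seq_mult'; [apply is_lim_seq_const|]. apply is_lim_seq_minus'.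
    - apply is_lim_seq_mult'; [|apply is_lim_seq_const].
      apply is_lim_seq_minus'; [apply is_lim_seq_const | apply Hgeom; lra].
    - apply is_lim_seq_mult'; [apply is_lim_seq_const|]. unfold Rdiv.
      apply is_lim_seq_mult'; [|apply is_lim_seq_const].
      apply is_lim_seq_mult'; [apply Hgeom; nra | apply is_lim_seq_const]. }
  replace (w * L) with (w * ((1 - 0) * L - Rpower d al * (0 / (d * d) / d))) by (field; lra).
  refine (is_lim_seq_le _ (fun _ => y) _ y _ Hlim (is_lim_seq_const y)). intros N.
  eapply Rle_trans; [|apply (Hy N N)]. apply Rmult_le_compat_l; [exact Hw|]. apply hilbert_trunc_ge.
Qed.

End HilbertTruncation.

Lemma exists_psum_csc_term_close al eps : 0 < al < 1 -> 0 < eps ->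
  exists M, Rabs (psum (csc_term al) (2 * M) - PI / sin (PI * al)) <= eps.
Proof.
  intros Hal He. destruct (archimed_cor1 (eps / 3) ltac:(lra)) as [M [HM1 HM2]].
  exists M. eapply Rle_trans; [apply Rabs_psum_csc_term_sub_le; auto; lia|].
  assert (HM : 0 < INR M) by (apply lt_0_INR; lia).
  apply Rmult_le_reg_r with (/ 3); [lra|]. unfold Rdiv in *. nra.
Qed.

Lemma exists_Rpower_le b tau : 0 < b -> 0 < tau ->
  exists delta, 0 < delta /\ forall d, 0 < d <= delta -> Rpower d b <= tau.
Proof.
  intros Hb Ht. exists (Rpower tau (/ b)). split; [apply Rpower_gt0|]. intros d Hd.
  apply Rle_trans with (Rpower (Rpower tau (/ b)) b); [apply Rle_Rpower_l; lra|].
  rewrite Rpower_mult, Rinv_l, Rpower_1 by lra. lra.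
Qed.

Lemma Rpower_ge_base x b : 0 < x <= 1 -> 0 < b <= 1 -> x <= Rpower x b.
Proof.
  intros Hx Hb. unfold Rpower. rewrite <- (exp_ln x) at 1 by lra.
  assert (Hl : ln x <= 0) by (rewrite <- ln_1; apply ln_le; lra).
  destruct (Req_dec (b * ln x) (ln x)) as [E|E]; [rewrite E; lra|].
  left. apply exp_increasing. nra.
Qed.

Lemma exists_csc_error_le al M eps : 0 < al < 1 -> 0 < eps ->
  exists delta, 0 < delta /\ forall d, 0 < d <= delta ->
    0 <= INR (2 * M) * (Rpower d (1 - al) / (1 - al) + Rpower d al / al) <= eps.
Proof.
  intros Hal He. set (C := INR (2 * M) * (/ (1 - al) + / al)).
  pose proof (Rinv_0_lt_compat (1 - al) ltac:(lra)). pose proof (Rinv_0_lt_compat al ltac:(lra)).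
  assert (HC : 0 <= C) by (apply Rmult_le_pos; [apply pos_INR | lra]).
  set (tau := eps / (C + 1)).
  assert (Htau : 0 < tau) by (apply Rdiv_lt_0_compat; lra).
  destruct (exists_Rpower_le (1 - al) tau ltac:(lra) Htau) as [d1 [Hd1 Hpow1]].
  destruct (exists_Rpower_le al tau ltac:(lra) Htau) as [d2 [Hd2 Hpow2]].
  exists (Rmin d1 d2). split; [apply Rmin_glb_lt; lra|]. intros d Hd.
  pose proof (Rmin_l d1 d2). pose proof (Rmin_r d1 d2).
  pose proof (Hpow1 d ltac:(lra)). pose proof (Hpow2 d ltac:(lra)).
  pose proof (Rpower_gt0 d (1 - al)). pose proof (Rpower_gt0 d al). pose proof (pos_INR (2 * M)).
  assert (Hle : Rpower d (1 - al) / (1 - al) + Rpower d al / al <= tau * (/ (1 - al) + / al))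
    by (unfold Rdiv; nra).
  assert (tau * C <= eps).
  { apply Rmult_le_reg_r with (C + 1); [lra|].
    replace (tau * C * (C + 1)) with (eps * C) by (unfold tau; field; lra). nra. }
  split; [apply Rmult_le_pos; [lra | unfold Rdiv; nra]|].
  apply Rle_trans with (INR (2 * M) * (tau * (/ (1 - al) + / al))); [apply Rmult_le_compat_l; lra|].
  unfold C in *. lra.
Qed.

Lemma exists_csc_lower_approx al eps : 0 < al < 1 -> 0 < eps ->
  exists d M, 0 < d < 1 /\
    PI / sin (PI * al) - eps
    <= (1 - d / 2) * (psum (csc_term al) (2 * M)
                      - INR (2 * M) * (Rpower d (1 - al) / (1 - al) + Rpower d al / al)).
Proof.
  intros Hal He. set (K0 := PI / sin (PI * al)).
  assert (HK0 : 0 < K0)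
    by (unfold K0; pose proof PI_RGT_0; apply Rdiv_lt_0_compat; [|apply sin_PI_mul_gt0]; lra).
  destruct (exists_psum_csc_term_close al (eps / 3) Hal ltac:(lra)) as [M HM].
  apply Rabs_le_between in HM. fold K0 in HM.
  destruct (exists_csc_error_le al M (eps / 3) Hal ltac:(lra)) as [delta [Hdelta HX]].
  set (d := Rmin delta (Rmin (eps / (3 * (K0 + eps))) (1 / 2))).
  assert (Hd0 : 0 < d) by (repeat apply Rmin_glb_lt; try apply Rdiv_lt_0_compat; lra).
  assert (Hdd : d <= delta /\ d <= eps / (3 * (K0 + eps)) /\ d <= 1 / 2).
  { unfold d. pose proof (Rmin_l delta (Rmin (eps / (3 * (K0 + eps))) (1 / 2))).
    pose proof (Rmin_r delta (Rmin (eps / (3 * (K0 + eps))) (1 / 2))).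
    pose proof (Rmin_l (eps / (3 * (K0 + eps))) (1 / 2)).
    pose proof (Rmin_r (eps / (3 * (K0 + eps))) (1 / 2)). lra. }
  exists d, M. split; [lra|]. specialize (HX d ltac:(lra)).
  set (S := psum (csc_term al) (2 * M)) in *.
  set (X := INR (2 * M) * (Rpower d (1 - al) / (1 - al) + Rpower d al / al)) in *.
  assert (Hdeps : d * (K0 + eps) <= eps / 3).
  { destruct Hdd as (_ & H & _). apply Rmult_le_compat_r with (r := K0 + eps) in H; [|lra].
    replace (eps / (3 * (K0 + eps)) * (K0 + eps)) with (eps / 3) in H by (field; lra). exact H. }
  assert (d / 2 * S <= d / 2 * (K0 + eps)) by (apply Rmult_le_compat_l; lra).
  assert (0 <= d / 2 * X) by (apply Rmult_le_pos; lra).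
  lra.
Qed.

Lemma sum_n_fst (u : nat -> C) n : fst (@sum_n C_AbelianMonoid u n) = sum_n (fun k => fst (u k)) n.
Proof. induction n; [rewrite !sum_O | rewrite !sum_Sn; simpl; rewrite <- IHn]; reflexivity. Qed.

Lemma sum_n_snd (u : nat -> C) n : snd (@sum_n C_AbelianMonoid u n) = sum_n (fun k => snd (u k)) n.
Proof. induction n; [rewrite !sum_O | rewrite !sum_Sn; simpl; rewrite <- IHn]; reflexivity. Qed.

Lemma is_series_fst (u : nat -> C) l : @is_series C_AbsRing C_NormedModule u l ->
  is_series (fun n => fst (u n)) (fst l).
Proof.
  intros H. change (is_lim_seq (sum_n (fun n => fst (u n))) (fst l)).
  apply (is_lim_seq_ext (fun n => fst (@sum_n C_AbelianMonoid u n))); [apply sum_n_fst|].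
  eapply filterlim_comp; [exact H|].
  intros P [e He]. exists e. intros y [Hy _]. apply He, Hy.
Qed.

Lemma is_series_snd (u : nat -> C) l : @is_series C_AbsRing C_NormedModule u l ->
  is_series (fun n => snd (u n)) (snd l).
Proof.
  intros H. change (is_lim_seq (sum_n (fun n => snd (u n))) (snd l)).
  apply (is_lim_seq_ext (fun n => snd (@sum_n C_AbelianMonoid u n))); [apply sum_n_snd|].
  eapply filterlim_comp; [exact H|].
  intros P [e He]. exists e. intros y [_ Hy]. apply He, Hy.
Qed.

Lemma ex_series_fst (u : nat -> C) : @ex_series C_AbsRing C_NormedModule u ->
  ex_series (fun n => fst (u n)).
Proof. intros [l H]. exists (fst l). apply is_series_fst, H. Qed.

Lemma Csum_is_series (u : nat -> C) l : @is_series C_AbsRing C_NormedModule u l -> Csum u = l.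
Proof.
  intros H. unfold Csum. rewrite (is_series_unique _ _ (is_series_fst u l H)).
  rewrite (is_series_unique _ _ (is_series_snd u l H)). destruct l; reflexivity.
Qed.

Lemma Cmod_is_series_le (u : nat -> C) l B : @is_series C_AbsRing C_NormedModule u l ->
  (forall n, Cmod (@sum_n C_AbelianMonoid u n) <= B) -> Cmod l <= B.
Proof.
  intros H HB.
  assert (Hlim : is_lim_seq (fun n => Cmod (@sum_n C_AbelianMonoid u n)) (Cmod l)).
  { eapply filterlim_comp; [exact H | exact (@filterlim_norm C_AbsRing C_NormedModule l)]. }
  exact (is_lim_seq_le _ (fun _ => B) _ B HB Hlim (is_lim_seq_const B)).
Qed.

Lemma Cpow_RtoC (x : R) n : Cpow (RtoC x) n = RtoC (x ^ n).
Proof. induction n; simpl; [reflexivity | rewrite IHn, RtoC_mult; reflexivity]. Qed.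

Lemma fst_mul_RtoC (x : C) (t : R) : fst (x * RtoC t)%C = fst x * t.
Proof. destruct x; simpl; ring. Qed.

Lemma korenblum_norm_finite al a : in_korenblum al a ->
  exists y, korenblum_norm al a = Finite y /\
    forall z, Cmod z < 1 -> kweight al z * Cmod (fun_of_coef a z) <= y.
Proof.
  intros [_ [M HM]]. unfold korenblum_norm.
  set (E := fun y => exists z : C, Cmod z < 1 /\ y = kweight al z * Cmod (fun_of_coef a z)).
  destruct (Lub_Rbar_correct E) as [Hub Hlub].
  assert (HE0 : Rbar_le (kweight al 0 * Cmod (fun_of_coef a 0)) (Lub_Rbar E)).
  { apply Hub. exists 0%C. split; [rewrite Cmod_0; lra | reflexivity]. }
  assert (HEM : Rbar_le (Lub_Rbar E) M) by (apply Hlub; intros y [z [Hz ->]]; apply HM; auto).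
  destruct (Lub_Rbar E) as [y| |]; simpl in HE0, HEM; try contradiction.
  exists y. split; [reflexivity|]. intros z Hz. apply (Hub _ (ex_intro _ z (conj Hz eq_refl))).
Qed.

Lemma hilbert_norm_ge al a y :
  in_korenblum al a -> Rbar_le (korenblum_norm al a) (Finite 1) ->
  korenblum_norm al (hilbert_coef a) = Finite y -> Rbar_le (Finite y) (hilbert_norm al).
Proof.
  intros Ha Hn Hy. unfold hilbert_norm.
  destruct (Lub_Rbar_correct (fun y => exists a : nat -> C,
     in_korenblum al a /\ Rbar_le (korenblum_norm al a) (Finite 1) /\
     korenblum_norm al (hilbert_coef a) = Finite y)) as [Hub _].
  apply Hub. exists a. auto.
Qed.

(** * The test function 2^(-al) (1 - z)^(-al) *)

Section TestFunction.
Variable al : R.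
Hypothesis Hal : 0 < al < 1.

(* [2^(-al)] normalises the test function to norm at most 1. *)
Definition test_scale : R := Rpower 2 (- al).
Definition test_coef (k : nat) : C := RtoC (test_scale * negbinom al k).

Lemma test_scale_bounds : 0 < test_scale <= 1.
Proof.
  split; [apply Rpower_gt0|]. unfold test_scale. rewrite <- (Rpower_O 2) by lra.
  pose proof (Rle_Rpower 2 (- al) 0 ltac:(lra) ltac:(lra)). lra.
Qed.

Lemma Cmod_test_term z k : Cmod (test_coef k * Cpow z k) = test_scale * negbinom al k * Cmod z ^ k.
Proof.
  unfold test_coef. rewrite Cmod_mult, Cmod_R, Cmod_pow, Rabs_pos_eq; [reflexivity|].
  destruct test_scale_bounds. destruct (negbinom_bounds al Hal k). nra.
Qed.

Lemma test_series z : Cmod z < 1 ->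
  exists l, @is_series C_AbsRing C_NormedModule (fun k => test_coef k * Cpow z k)%C l /\
            Cmod l <= test_scale * Rpower (1 - Cmod z) (- al).
Proof.
  intros Hz. pose proof (Cmod_ge_0 z). destruct test_scale_bounds.
  assert (Hr : Rbar_lt (Rabs (Cmod z)) (CV_radius (negbinom al)))
    by (apply CV_radius_negbinom; auto; rewrite Rabs_pos_eq; lra).
  pose proof (is_series_PSeries _ _ Hr) as Hser. rewrite PSeries_negbinom in Hser by (auto; lra).
  destruct (@ex_series_le C_AbsRing C_CompleteNormedModule (fun k => test_coef k * Cpow z k)%C
              (fun k => test_scale * (negbinom al k * Cmod z ^ k))) as [l Hl].
  - intros n. change norm with Cmod. rewrite Cmod_test_term. right; ring.
  - eexists. apply (is_series_scal_l test_scale (fun k => negbinom al k * Cmod z ^ k)), Hser.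
  - exists l. split; [exact Hl|]. apply (Cmod_is_series_le _ _ _ Hl). intros n.
    eapply Rle_trans;
      [exact (@norm_sum_n_m C_AbsRing C_NormedModule (fun k => test_coef k * Cpow z k)%C 0 n)|].
    change (sum_n (fun k => Cmod (test_coef k * Cpow z k)) n
            <= test_scale * Rpower (1 - Cmod z) (- al)).
    rewrite (sum_n_ext _ (fun k => test_scale * (negbinom al k * Cmod z ^ k)));
      [|intros; rewrite Cmod_test_term; apply Rmult_assoc].
    rewrite sum_n_psum, psum_scal.
    apply Rmult_le_compat_l; [lra|].
    apply psum_le_is_series; [intros; apply negbinom_term_ge0; lra | exact Hser].
Qed.

Lemma kweight_test_bound z : Cmod z < 1 ->
  kweight al z * (test_scale * Rpower (1 - Cmod z) (- al)) <= 1.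
Proof.
  intros Hz. pose proof (Cmod_ge_0 z) as Hz0. unfold kweight, test_scale. set (x := Cmod z) in *.
  replace (1 - x ^ 2) with ((1 - x) * (1 + x)) by ring.
  rewrite <- Rpower_mult_distr by lra.
  replace (Rpower (1 - x) al * Rpower (1 + x) al * (Rpower 2 (- al) * Rpower (1 - x) (- al)))
    with ((Rpower (1 - x) al * Rpower (1 - x) (- al)) * (Rpower (1 + x) al * Rpower 2 (- al)))
    by ring.
  rewrite Rpower_mul_opp, Rmult_1_l, Rpower_Ropp by lra.
  pose proof (Rle_Rpower_l (1 + x) 2 al ltac:(lra) ltac:(lra)). pose proof (Rpower_gt0 2 al).
  apply Rmult_le_reg_r with (Rpower 2 al); [lra|]. rewrite Rmult_assoc, Rinv_l; lra.
Qed.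

Lemma test_in_unit_ball : in_korenblum al test_coef /\ Rbar_le (korenblum_norm al test_coef) (Finite 1).
Proof.
  assert (Hb : forall z, Cmod z < 1 -> kweight al z * Cmod (fun_of_coef test_coef z) <= 1).
  { intros z Hz. destruct (test_series z Hz) as [l [Hl Hm]]. unfold fun_of_coef.
    rewrite (Csum_is_series _ _ Hl). eapply Rle_trans; [|apply (kweight_test_bound z Hz)].
    apply Rmult_le_compat_l; [apply Rlt_le, Rpower_gt0 | exact Hm]. }
  split; [split|].
  - intros z Hz. destruct (test_series z Hz) as [l [Hl _]]. exists l; exact Hl.
  - exists 1. exact Hb.
  - unfold korenblum_norm. apply Lub_Rbar_correct. intros y [z [Hz ->]]. apply Hb; auto.
Qed.

Lemma kweight_real_scale d : 0 < d < 1 ->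
  kweight al (RtoC (1 - d)) * test_scale = Rpower (1 - d / 2) al * Rpower d al.
Proof.
  intros Hd. unfold kweight, test_scale. rewrite Cmod_R, Rabs_pos_eq by lra.
  replace (1 - (1 - d) ^ 2) with (2 * ((1 - d / 2) * d)) by field.
  rewrite <- !Rpower_mult_distr by nra.
  pose proof (Rpower_mul_opp 2 al ltac:(lra)) as H2.
  transitivity ((Rpower 2 al * Rpower 2 (- al)) * (Rpower (1 - d / 2) al * Rpower d al)); [ring|].
  rewrite H2; ring.
Qed.

Lemma test_hilbert_value d N K :
  hilbert_defined test_coef -> analytic_on_disc (hilbert_coef test_coef) -> 0 < d < 1 ->
  Rpower (1 - d / 2) al * (Rpower d al * hilbert_trunc al (1 - d) N K)
  <= kweight al (RtoC (1 - d)) * Cmod (fun_of_coef (hilbert_coef test_coef) (RtoC (1 - d))).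
Proof.
  intros Hdef Han Hd. destruct test_scale_bounds. set (r := 1 - d).
  set (b := fun n => fst (hilbert_coef test_coef n)).
  set (t := fun n k => test_scale * negbinom al k * / INR (n + k + 1)).
  assert (Ht : forall n k, 0 <= t n k).
  { intros n k. destruct (negbinom_bounds al Hal k). apply Rmult_le_pos; [nra|].
    apply Rlt_le, Rinv_0_lt_compat, lt_0_INR. lia. }
  assert (Hb : forall n, psum (t n) K <= b n /\ 0 <= b n).
  { intros n. assert (Hex : ex_series (t n)).
    { destruct (ex_series_fst _ (Hdef n)) as [l Hl]. exists l. eapply is_series_ext; [|exact Hl].
      intros k. unfold t, test_coef. simpl. ring. }
    assert (E : b n = Series (t n))
      by (apply Series_ext; intros k; unfold t, test_coef; simpl; ring).
    rewrite E. split; [|eapply Rle_trans; [apply (psum_ge0 (t n) K); auto|]];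
      apply psum_le_Series; auto. }
  assert (Hexf : ex_series (fun n => b n * r ^ n)).
  { destruct (ex_series_fst _ (Han (RtoC r) ltac:(rewrite Cmod_R, Rabs_pos_eq; unfold r; lra)))
      as [l Hl].
    exists l. eapply is_series_ext; [|exact Hl]. intros n. cbv beta.
    rewrite Cpow_RtoC, fst_mul_RtoC. reflexivity. }
  assert (Htrunc : test_scale * hilbert_trunc al r N K <= Series (fun n => b n * r ^ n)).
  { assert (Hrn : forall n, 0 <= r ^ n) by (intros; apply pow_le; unfold r; lra).
    eapply Rle_trans;
      [|apply psum_le_Series; auto; intros; apply Rmult_le_pos; [apply Hb | apply Hrn]].
    unfold hilbert_trunc. rewrite <- psum_scal. apply psum_le. intros n _.
    apply Rle_trans with (psum (t n) K * r ^ n); [|apply Rmult_le_compat_r; [apply Hrn | apply Hb]].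
    right. rewrite <- psum_scal, (Rmult_comm (psum (t n) K)), <- psum_scal.
    apply psum_ext. intros k _. unfold t. rewrite !plus_INR. simpl INR.
    pose proof (pos_INR n). pose proof (pos_INR k). field. lra. }
  assert (Hval : Series (fun n => b n * r ^ n)
                 <= Cmod (fun_of_coef (hilbert_coef test_coef) (RtoC r))).
  { replace (Series (fun n => b n * r ^ n))
      with (fst (fun_of_coef (hilbert_coef test_coef) (RtoC r))).
    - eapply Rle_trans; [apply Rle_abs | apply re_le_Cmod].
    - unfold fun_of_coef, Csum. apply Series_ext. intros n.
      rewrite Cpow_RtoC, fst_mul_RtoC. reflexivity. }
  rewrite <- Rmult_assoc, <- kweight_real_scale, Rmult_assoc by auto.
  apply Rmult_le_compat_l; [apply Rlt_le, Rpower_gt0 | lra].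
Qed.

Lemma test_hilbert_value_ge d M :
  hilbert_defined test_coef -> analytic_on_disc (hilbert_coef test_coef) -> 0 < d < 1 ->
  (1 - d / 2) * (psum (csc_term al) (2 * M)
                 - INR (2 * M) * (Rpower d (1 - al) / (1 - al) + Rpower d al / al))
  <= kweight al (RtoC (1 - d)) * Cmod (fun_of_coef (hilbert_coef test_coef) (RtoC (1 - d))).
Proof.
  intros Hdef Han Hd. apply hilbert_trunc_bounded_ge; auto; [lra|]. intros N K.
  eapply Rle_trans; [|apply test_hilbert_value; auto].
  apply Rmult_le_compat_r; [|apply Rpower_ge_base; lra].
  apply Rmult_le_pos; [apply Rlt_le, Rpower_gt0 | apply hilbert_trunc_ge0; lra].
Qed.

End TestFunction.

Theorem mainTheorem1 (alpha : R) (Ha0 : 0 < alpha) (Ha1 : alpha < 1)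
  (Hacts : forall a : nat -> C, in_korenblum alpha a ->
             hilbert_defined a /\ in_korenblum alpha (hilbert_coef a)) :
  Rbar_le (Finite (PI / sin (PI * alpha))) (hilbert_norm alpha).
Proof.
  assert (Ha : 0 < alpha < 1) by lra.
  destruct (test_in_unit_ball alpha Ha) as [Hf Hf1].
  destruct (Hacts _ Hf) as [Hdef HHf].
  destruct (korenblum_norm_finite _ _ HHf) as [y [Hy Hbound]].
  apply Rbar_le_trans with (Finite y); [|exact (hilbert_norm_ge _ _ _ Hf Hf1 Hy)].
  simpl. apply Rle_plus_epsilon. intros eps Heps.
  destruct (exists_csc_lower_approx alpha eps Ha Heps) as [d [M [Hd Happrox]]].
  pose proof (test_hilbert_value_ge alpha Ha d M Hdef (proj1 HHf) Hd) as Hvalue.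
  pose proof (Hbound (RtoC (1 - d)) ltac:(rewrite Cmod_R, Rabs_pos_eq; lra)).
  lra.
Qed.
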